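(* In BID-logic the following logical equivalences hold: (1) $=\!\!(t_1,\dots,t_n)\equiv \big(=\!\!(t_1)\wedge\dots\wedge=\!\!(t_{n-1})\big)\to=\!\!(t_n)$ for any terms $t_1,\dots,t_n$; (2) $\neg\phi\equiv\phi\to\bot$ whenever $\phi$ is an atom, i.e. a first-order atomic formula or a dependence atom $=\!\!(t_1,\dots,t_n)$ (where $\neg\phi$ is the corresponding negated atomic formula, resp. $\neg=\!\!(t_1,\dots,t_n)$); (3) $(\phi\to\bot)\to\bot\equiv\phi$ whenever $\phi$ is a flat formula; (4) $\phi\otimes\psi\equiv(\phi\to\bot)\to\psi$ whenever $\phi$ and $\psi$ are flat formulas. Here $\phi\equiv\psi$ means that for every suitable structure $M$ and every team $X$ of $M$ with $dom(X)\supseteq Fv(\phi)\cup Fv(\psi)$, $M\models_X\phi$ iff $M\models_X\psi$.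
   Context: Fix a first-order signature; structures have non-empty domains. An assignment on $M$ is a function from a finite set of variables into the domain of $M$; $s(a/x)$ agrees with $s$ except that it sends $x$ to $a$. A team $X$ of $M$ is a set of assignments all with the same domain $dom(X)$. For $F:X\to M$, $X(F/x)=\{s(F(s)/x):s\in X\}$; $X(M/x)=\{s(a/x):a\in M,s\in X\}$. Formulas of BID-logic: $\phi::=\alpha\mid=\!\!(t_1,\dots,t_n)\mid\neg=\!\!(t_1,\dots,t_n)\mid\bot\mid\phi\wedge\phi\mid\phi\otimes\phi\mid\phi\veebar\phi\mid\phi\to\phi\mid\phi\multimap\phi\mid\forall x\phi\mid\exists x\phi$, with $\alpha$ a first-order literal (atomic or negated atomic formula) and $t_i$ terms; $Fv(=\!\!(t_1,\dots,t_n))$ is the set of variables in the $t_i$, otherwise free variables as usual. Semantics for teams $X$ with $dom(X)\supseteq$ free variables: $M\models_X\alpha$ iff $M\models_s\alpha$ for all $s\in X$; $M\models_X=\!\!(t_1,\dots,t_n)$ iff for all $s,s'\in X$ with $s(t_i)=s'(t_i)$ for all $i<n$, $s(t_n)=s'(t_n)$ (so $M\models_X=\!\!(t)$ iff $t$ takes a single value on $X$); $M\models_X\neg=\!\!(\dots)$ iff $X=\emptyset$; $M\models_X\bot$ iff $X=\emptyset$; $\wedge$ as usual; $M\models_X\phi\otimes\psi$ iff $X=Y\cup Z$ for some $Y,Z\subseteq X$ with $M\models_Y\phi$, $M\models_Z\psi$; $M\models_X\phi\veebar\psi$ iff $M\models_X\phi$ or $M\models_X\psi$; $M\models_X\phi\to\psi$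 iff for all $Y\subseteq X$, $M\models_Y\phi$ implies $M\models_Y\psi$; $M\models_X\phi\multimap\psi$ iff for all teams $Y$ with $dom(Y)=dom(X)$, $M\models_Y\phi$ implies $M\models_{X\cup Y}\psi$; $M\models_X\exists x\phi$ iff $M\models_{X(F/x)}\phi$ for some $F:X\to M$; $M\models_X\forall x\phi$ iff $M\models_{X(M/x)}\phi$. A formula $\phi$ is flat if for all suitable $M$ and teams $X$: $M\models_X\phi$ iff $M\models_{\{s\}}\phi$ for all $s\in X$. *)

From mathcomp Require Import all_boot.
From Stdlib Require List.

Set Implicit Arguments.
Unset Strict Implicit.
Unset Printing Implicit Defensive.

Record signature : Type := Signature {
  funsym : Type;               (* function symbols (constants = arity 0) *)
  fun_ar : funsym -> nat;
  relsym : Type;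
  rel_ar : relsym -> nat
}.

Inductive term (S : signature) : Type :=
| Var : nat -> term S
| App : forall f : funsym S, ('I_(fun_ar f) -> term S) -> term S.
Arguments Var {S} _.

Record structure (S : signature) : Type := Structure {
  carrier : Type;
  witness : carrier;           (* the domain is non-empty *)
  fun_int : forall f : funsym S, ('I_(fun_ar f) -> carrier) -> carrier;
  rel_int : forall r : relsym S, ('I_(rel_ar r) -> carrier) -> Prop
}.

(* An assignment is a partial function from variables into the domain, with
   finite domain (the domain is made explicit in the notion of team below). *)
Definition assignment S (M : structure S) := nat -> option (carrier M).

Definition upd S (M : structure S) (s : assignment M) (x : nat) (a : carrier M)
  : assignment M := fun y => if y == x then Some a else s y.

Definition team S (M : structure S) := assignment M -> Prop.

Definition is_team S (M : structure S) (D : seq nat) (X : team M) : Prop :=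
  forall s, X s -> forall x, isSome (s x) = (x \in D).

(* Value of a term (variables outside the domain get the witness; this never
   matters since the semantics is only used when dom(X) contains Fv). *)
Fixpoint eval S (M : structure S) (s : assignment M) (t : term S) : carrier M :=
  match t with
  | Var x => odflt (witness M) (s x)
  | App f a => @fun_int S M f (fun i => eval s (a i))
  end.

Fixpoint term_in S (D : seq nat) (t : term S) : Prop :=
  match t with
  | Var x => x \in D
  | App f a => forall i, term_in D (a i)
  end.

Inductive formula (S : signature) : Type :=
| Rel  : forall r : relsym S, ('I_(rel_ar r) -> term S) -> formula S
| NRel : forall r : relsym S, ('I_(rel_ar r) -> term S) -> formula S
| Eq   : term S -> term S -> formula S
| NEq  : term S -> term S -> formula S
| Dep  : seq (term S) -> term S -> formula S   (* Dep [t1;..;t(n-1)] tn  is  =(t1,..,tn) *)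
| NDep : seq (term S) -> term S -> formula S
| Bot  : formula S
| And  : formula S -> formula S -> formula S
| Tensor : formula S -> formula S -> formula S
| Vee  : formula S -> formula S -> formula S
| Imp  : formula S -> formula S -> formula S
| Lolli : formula S -> formula S -> formula S
| Forall : nat -> formula S -> formula S
| Exists : nat -> formula S -> formula S.

Arguments Bot {S}.
Arguments Rel {S} r _.
Arguments NRel {S} r _.
Arguments App {S} f _.

Fixpoint fv_in S (D : seq nat) (phi : formula S) : Prop :=
  match phi with
  | Rel r a | NRel r a => forall i, term_in D (a i)
  | Eq t u | NEq t u => term_in D t /\ term_in D u
  | Dep ts t | NDep ts t => (forall u, List.In u ts -> term_in D u) /\ term_in D t
  | Bot => True
  | And p q | Tensor p q | Vee p q | Imp p q | Lolli p q => fv_in D p /\ fv_in D q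
  | Forall x p | Exists x p => fv_in (x :: D) p
  end.

(* Team semantics: sat M D X phi  is  M |=_X phi  for a team X of domain D. *)
Fixpoint sat S (M : structure S) (D : seq nat) (X : team M) (phi : formula S)
  : Prop :=
  match phi with
  | Rel r a => forall s, X s -> @rel_int S M r (fun i => eval s (a i))
  | NRel r a => forall s, X s -> ~ @rel_int S M r (fun i => eval s (a i))
  | Eq t u => forall s, X s -> eval s t = eval s u
  | NEq t u => forall s, X s -> eval s t <> eval s u
  | Dep ts t => forall s s', X s -> X s' ->
      (forall u, List.In u ts -> eval s u = eval s' u) -> eval s t = eval s' t
  | NDep ts t => forall s, ~ X s
  | Bot => forall s, ~ X s
  | And p q => sat D X p /\ sat D X q
  | Tensor p q => exists Y Z : team M,
      (forall s, X s <-> (Y s \/ Z s)) /\ sat D Y p /\ sat D Z q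
  | Vee p q => sat D X p \/ sat D X q
  | Imp p q => forall Y : team M, (forall s, Y s -> X s) ->
      sat D Y p -> sat D Y q
  | Lolli p q => forall Y : team M, is_team D Y ->
      sat D Y p -> sat D (fun s => X s \/ Y s) q
  | Exists x p => exists F : assignment M -> carrier M,
      sat (x :: D) (fun s' => exists s, X s /\ s' = upd s x (F s)) p
  | Forall x p =>
      sat (x :: D) (fun s' => exists s a, X s /\ s' = upd s x a) p
  end.

Definition flat S (phi : formula S) : Prop :=
  forall (M : structure S) (D : seq nat) (X : team M),
    is_team D X -> fv_in D phi ->
    (sat D X phi <-> forall s, X s -> sat D (fun s' => s' = s) phi).

Definition lequiv S (phi psi : formula S) : Prop :=
  forall (M : structure S) (D : seq nat) (X : team M),
    is_team D X -> fv_in D phi -> fv_in D psi ->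
    (sat D X phi <-> sat D X psi).

Definition const_conj S (t1 : term S) (ts : seq (term S)) : formula S :=
  foldl (fun p t => And p (Dep [::] t)) (Dep [::] t1) ts.

(* Flat formulas are determined by the singleton subteams, and so are the
   negated atoms.  [phi -> bot] holds on X iff no singleton of X satisfies
   [phi], as long as [phi] passes from subteams of X to their singletons; hence
   for atoms and flat formulas every side of (2)-(4) reduces to a pointwise
   condition on the assignments of X, where classical propositional logic
   finishes the job.  For (1), two assignments agreeing on [t1 .. t(n-1)] form
   a two-element subteam on which these terms are constant. *)

From mathcomp Require Import all_boot.
From Stdlib Require Import Classical.
From Stdlib Require List.

Set Implicit Arguments.
Unset Strict Implicit.
Unset Printing Implicit Defensive.

Section TeamSemantics.

Variables (S : signature) (M : structure S).

Definition singleton (s : assignment M) : team M := fun s' => s' = s.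

Definition const_on (Y : team M) (t : term S) : Prop :=
  forall s s', Y s -> Y s' -> eval s t = eval s' t.

Lemma singleton_sub (X : team M) s : X s -> forall s', singleton s s' -> X s'.
Proof. by move=> Xs s' ->. Qed.

Lemma is_team_sub D (X Y : team M) :
  is_team D X -> (forall s, Y s -> X s) -> is_team D Y.
Proof. by move=> TX YX s /YX; apply: TX. Qed.

Lemma flat_sat_sub D (X Y : team M) (phi : formula S) :
  flat phi -> is_team D X -> fv_in D phi -> (forall s, Y s -> X s) ->
  (sat D Y phi <-> forall s, Y s -> sat D (singleton s) phi).
Proof. by move=> Fphi TX Fv YX; apply: Fphi => //; apply: is_team_sub YX. Qed.

Lemma sat_imp_sub D (X Y : team M) (phi psi : formula S) :
  (forall s, Y s -> X s) -> sat D X (Imp phi psi) -> sat D Y (Imp phi psi).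
Proof. by move=> YX H Z ZY; apply: H => s /ZY /YX. Qed.

Definition downward_closed (phi : formula S) : Prop :=
  forall D (X Y : team M), (forall s, Y s -> X s) -> sat D X phi -> sat D Y phi.

Lemma sat_imp_bot D (X : team M) (phi : formula S) :
  (forall Y : team M, (forall s, Y s -> X s) -> sat D Y phi ->
     forall s, Y s -> sat D (singleton s) phi) ->
  (sat D X (Imp phi Bot) <-> forall s, X s -> ~ sat D (singleton s) phi).
Proof.
move=> phi_singletons; split.
  by move=> H s Xs Hs; apply: (H _ (singleton_sub Xs) Hs s).
by move=> H Y YX HY s Ys; apply: (H s (YX s Ys)); apply: phi_singletons HY s Ys.
Qed.

Lemma downward_closed_sat_imp_bot D (X : team M) (phi : formula S) :
  downward_closed phi ->
  (sat D X (Imp phi Bot) <-> forall s, X s -> ~ sat D (singleton s) phi).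
Proof.
move=> dc_phi; apply: sat_imp_bot => Y _ HY s Ys.
exact: dc_phi (singleton_sub Ys) HY.
Qed.

Lemma flat_sat_imp_bot D (X : team M) (phi : formula S) :
  flat phi -> is_team D X -> fv_in D phi ->
  (sat D X (Imp phi Bot) <-> forall s, X s -> ~ sat D (singleton s) phi).
Proof.
move=> Fphi TX Fv; apply: sat_imp_bot => Y YX.
exact: (flat_sat_sub Fphi TX Fv YX).1.
Qed.

Lemma sat_dep_nil D (Y : team M) (t : term S) :
  sat D Y (Dep [::] t) <-> const_on Y t.
Proof. by split=> H s s' Ys Ys' => [|_]; apply: H. Qed.

Lemma sat_foldl_const D (Y : team M) (phi : formula S) (ts : seq (term S)) :
  sat D Y (foldl (fun p t => And p (Dep [::] t)) phi ts) <->
  sat D Y phi /\ forall t, List.In t ts -> const_on Y t.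
Proof.
elim: ts phi => [|t ts IH] phi /=; first by split=> [|[]].
rewrite IH; change (sat D Y (And phi _)) with (sat D Y phi /\ sat D Y (Dep [::] t)).
rewrite sat_dep_nil; split.
  by case=> -[Hphi Ht] Hts; split=> // u [<-|/Hts].
case=> Hphi Hts; split; first by split=> //; apply: Hts; left.
by move=> u Hu; apply: Hts; right.
Qed.

Lemma sat_const_conj D (Y : team M) (t1 : term S) (ts : seq (term S)) :
  sat D Y (const_conj t1 ts) <-> forall t, List.In t (t1 :: ts) -> const_on Y t.
Proof.
rewrite /const_conj sat_foldl_const sat_dep_nil; split.
  by case=> H1 Hts t [<-|/Hts].
by move=> H; split=> [|t Ht]; apply: H; [left | right].
Qed.

Lemma flat_sat_tensor D (X : team M) (phi psi : formula S) :
  flat phi -> flat psi -> is_team D X -> fv_in D phi -> fv_in D psi ->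
  (sat D X (Tensor phi psi) <->
   forall s, X s -> sat D (singleton s) phi \/ sat D (singleton s) psi).
Proof.
move=> Fphi Fpsi TX Fv_phi Fv_psi; split.
  case=> Y [Z [XYZ [HY HZ]]] s /XYZ [Ys|Zs].
    left; apply: (flat_sat_sub Fphi TX Fv_phi _).1 HY s Ys.
    by move=> x Yx; apply/XYZ; left.
  right; apply: (flat_sat_sub Fpsi TX Fv_psi _).1 HZ s Zs.
  by move=> x Zx; apply/XYZ; right.
move=> H.
exists (fun s => X s /\ sat D (singleton s) phi).
exists (fun s => X s /\ ~ sat D (singleton s) phi).
split; [|split].
- move=> s; split=> [Xs|[[]|[]]] //.
  by case: (classic (sat D (singleton s) phi)); [left|right].
- by apply/(flat_sat_sub Fphi TX Fv_phi) => [s []|s []].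
- apply/(flat_sat_sub Fpsi TX Fv_psi) => [s []|s [Xs not_phi]] //.
  by case: (H s Xs).
Qed.

Lemma flat_sat_imp_neg D (X : team M) (phi psi : formula S) :
  flat phi -> flat psi -> is_team D X -> fv_in D phi -> fv_in D psi ->
  (sat D X (Imp (Imp phi Bot) psi) <->
   forall s, X s -> ~ sat D (singleton s) phi -> sat D (singleton s) psi).
Proof.
move=> Fphi Fpsi TX Fv_phi Fv_psi; split.
  move=> H s Xs not_phi; apply: (H _ (singleton_sub Xs)).
  by apply/(flat_sat_imp_bot Fphi (is_team_sub TX (singleton_sub Xs)) Fv_phi) => _ ->.
move=> H Y YX /(flat_sat_imp_bot Fphi (is_team_sub TX YX) Fv_phi) not_phi.
apply/(flat_sat_sub Fpsi TX Fv_psi YX) => s Ys.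
exact: H (YX _ Ys) (not_phi s Ys).
Qed.

End TeamSemantics.

Lemma dep_lequiv_imp_const_conj S (t1 : term S) (ts : seq (term S)) (tn : term S) :
  lequiv (Dep (t1 :: ts) tn) (Imp (const_conj t1 ts) (Dep [::] tn)).
Proof.
move=> M D X _ _ _; split.
  move=> Hdep Y YX /sat_const_conj Hc; apply/(sat_dep_nil D) => s s' Ys Ys'.
  apply: Hdep (YX _ Ys) (YX _ Ys') _ => u Hu.
  exact: Hc u Hu s s' Ys Ys'.
move=> H s s' Xs Xs' agree.
pose P : team M := fun x => x = s \/ x = s'.
have PX : forall x, P x -> X x by move=> x [->|->].
have Pc : sat D P (const_conj t1 ts).
  apply/sat_const_conj => t Ht x y [->|->] [->|->] //; [|symmetry]; exact: agree.
by apply: (sat_dep_nil D P tn).1 (H P PX Pc) _ _ (or_introl erefl) (or_intror erefl).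
Qed.

Lemma lequiv_imp_bot S (phi nphi : formula S) :
  (forall M, downward_closed M phi) ->
  (forall M D (Y : team M), sat D Y nphi <-> forall s, Y s -> ~ sat D (singleton s) phi) ->
  lequiv nphi (Imp phi Bot).
Proof.
move=> dc_phi sat_nphi M D X _ _ _.
by rewrite sat_nphi downward_closed_sat_imp_bot.
Qed.

Lemma nrel_lequiv_imp_bot S (r : relsym S) (a : 'I_(rel_ar r) -> term S) :
  lequiv (NRel r a) (Imp (Rel r a) Bot).
Proof.
apply: lequiv_imp_bot => [M D X Y YX H s /YX /H //|M D Y].
split=> H s Ys HR; first exact: H s Ys (HR s erefl).
by apply: (H s Ys) => _ ->.
Qed.

Lemma neq_lequiv_imp_bot S (t u : term S) : lequiv (NEq t u) (Imp (Eq t u) Bot).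
Proof.
apply: lequiv_imp_bot => [M D X Y YX H s /YX /H //|M D Y].
split=> H s Ys Heq; first exact: H s Ys (Heq s erefl).
by apply: (H s Ys) => _ ->.
Qed.

Lemma ndep_lequiv_imp_bot S (ts : seq (term S)) (t : term S) :
  lequiv (NDep ts t) (Imp (Dep ts t) Bot).
Proof.
apply: lequiv_imp_bot => [M D X Y YX H s s' /YX Xs /YX Xs'|M D Y]; first exact: H.
split=> H s Ys; first by case: (H s Ys).
by apply: (H s Ys) => _ _ -> ->.
Qed.

Lemma flat_double_neg_lequiv S (phi : formula S) :
  flat phi -> lequiv (Imp (Imp phi Bot) Bot) phi.
Proof.
move=> Fphi M D X TX _ Fv.
have neg_singleton s :
    X s -> sat D (singleton s) (Imp phi Bot) <-> ~ sat D (singleton s) phi.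
  move=> Xs; rewrite (flat_sat_imp_bot Fphi (is_team_sub TX (singleton_sub Xs)) Fv).
  by split=> [H|H _ ->] //; apply: H.
rewrite (Fphi M D X TX Fv) sat_imp_bot; last first.
  by move=> Y _ H s Ys; apply: sat_imp_sub H; apply: singleton_sub.
split=> H s Xs.
  by apply: NNPP; rewrite -neg_singleton //; apply: H.
by rewrite neg_singleton //; apply; apply: H.
Qed.

Lemma flat_tensor_lequiv S (phi psi : formula S) :
  flat phi -> flat psi -> lequiv (Tensor phi psi) (Imp (Imp phi Bot) psi).
Proof.
move=> Fphi Fpsi M D X TX [Fv_phi Fv_psi] _.
rewrite flat_sat_tensor // flat_sat_imp_neg //.
split=> H s Xs; first by case: (H s Xs).
by case: (classic (sat D (singleton s) phi)) => [|/(H s Xs)]; [left|right].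
Qed.

Theorem lemma3p1 (S : signature) :
  (forall (t1 : term S) (ts : seq (term S)) (tn : term S),
      lequiv (Dep (t1 :: ts) tn) (Imp (const_conj t1 ts) (Dep [::] tn))) /\
  (forall (r : relsym S) (a : 'I_(rel_ar r) -> term S),
      lequiv (NRel r a) (Imp (Rel r a) Bot)) /\
  (forall t u : term S, lequiv (NEq t u) (Imp (Eq t u) Bot)) /\
  (forall (ts : seq (term S)) (t : term S),
      lequiv (NDep ts t) (Imp (Dep ts t) Bot)) /\
  (forall phi : formula S, flat phi -> lequiv (Imp (Imp phi Bot) Bot) phi) /\
  (forall phi psi : formula S, flat phi -> flat psi ->
      lequiv (Tensor phi psi) (Imp (Imp phi Bot) psi)).
Proof.
split; first exact: dep_lequiv_imp_const_conj.
split; first exact: nrel_lequiv_imp_bot.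
split; first exact: neq_lequiv_imp_bot.
split; first exact: ndep_lequiv_imp_bot.
split; first exact: flat_double_neg_lequiv.
exact: flat_tensor_lequiv.
Qed.
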